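(* Let $q\ge 4$ be a power of $2$. Then there exists a linear AOA$(1,3,q+2,q)$.
   Context: An orthogonal array OA$(t,k,v)$ (with $1\le t\le k$) is a $v^t\times k$ array with entries from a set $X$ of size $v$ such that, for every choice of $t$ of its columns, each $t$-tuple in $X^t$ appears exactly once as a row of the corresponding $v^t\times t$ subarray. For integers $1\le s\le t\le k$, an augmented orthogonal array AOA$(s,t,k,v)$ is a $v^t\times(k+1)$ array $A$ such that: (1) the first $k$ columns of $A$ form an OA$(t,k,v)$ on a symbol set $X$ of size $v$; (2) the last column of $A$ has entries from a set $Y$ of size $v^{t-s}$; (3) for any choice of $s$ of the first $k$ columns, these $s$ columns together with the last column contain every $(s+1)$-tuple of $X^s\times Y$ exactly once as a row. For a prime power $q$, an AOA$(s,t,k,q)$ is linear if $X=\mathbb{F}_q$, $Y=\mathbb{F}_q^{t-s}$, and its set of rows, regarded as vectors in $\mathbb{F}_q^{k}\times\mathbb{F}_q^{t-s}=\mathbb{F}_q^{k+t-s}$, is an $\mathbb{F}_q$-linear subspace. *)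

From HB Require Import structures.
From mathcomp Require Import all_boot all_algebra.
Set Implicit Arguments. Unset Strict Implicit. Unset Printing Implicit Defensive.
Import GRing.Theory.
Local Open Scope ring_scope.

Definition is_OA (X : finType) (t k v : nat) (A : seq {ffun 'I_k -> X}) : Prop :=
  [/\ (1 <= t <= k)%N, #|X| = v, size A = (v ^ t)%N &
      forall c : 'I_t -> 'I_k, injective c ->
        forall x : {ffun 'I_t -> X},
          count (fun r : {ffun 'I_k -> X} => [forall i, r (c i) == x i]) A = 1%N].

(* AOA(s,t,k,v): a v^t x (k+1) array, row = (first k entries, last entry). *)
Definition is_AOA (X Y : finType) (s t k v : nat)
    (A : seq ({ffun 'I_k -> X} * Y)) : Prop :=
  [/\ (1 <= s <= t)%N, (t <= k)%N,
      is_OA t v (map fst A),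
      #|Y| = (v ^ (t - s))%N &
      forall c : 'I_s -> 'I_k, injective c ->
        forall (x : {ffun 'I_s -> X}) (y : Y),
          count (fun r : {ffun 'I_k -> X} * Y =>
                   [forall i, r.1 (c i) == x i] && (r.2 == y)) A = 1%N].

Definition is_linear_AOA (F : finFieldType) (s t k : nat)
    (A : seq ({ffun 'I_k -> F} * 'rV[F]_(t - s))) : Prop :=
  [/\ is_AOA s t #|F| A,
      ((0 : {ffun 'I_k -> F}), (0 : 'rV[F]_(t - s))) \in A,
      (forall r1 r2 : {ffun 'I_k -> F} * 'rV[F]_(t - s), r1 \in A -> r2 \in A -> (r1.1 + r2.1, r1.2 + r2.2) \in A) &
      (forall (a : F) (r : {ffun 'I_k -> F} * 'rV[F]_(t - s)), r \in A -> ([ffun j => a * r.1 j], a *: r.2) \in A)].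
Arguments is_linear_AOA {F} s t k A.

From mathcomp Require Import all_boot all_algebra all_field.
From mathcomp Require Import ring zify.
Set Implicit Arguments. Unset Strict Implicit. Unset Printing Implicit Defensive.
Import GRing.Theory.
Local Open Scope ring_scope.

(* The rows are the codewords u *m [hyperoval_mx | tail_mx], u : 'rV_3.  The
   columns of hyperoval_mx are the q + 2 points of the hyperoval
   {(1, a, a^2)} + {(0, 1, 0), (0, 0, 1)}: a conic together with its nucleus,
   which exists because q is even.  No three of these points are collinear,
   so any three columns are independent and the first q + 2 columns form an
   OA(3, q + 2, q).  The last column is u *m tail_mx, whose left kernel is
   spanned by (b, 1, 1); this vector is orthogonal to no hyperoval point as
   soon as a^2 + a + b <> 0 for all a, and such b exists because a |-> a^2 + a
   identifies 0 and 1, hence is not onto.  So each hyperoval column together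
   with tail_mx is an invertible 3 x 3 matrix, which is the AOA condition. *)

Lemma count_injective_eq1 (T V : finType) (f : T -> V) (x : V) :
  (#|V| <= #|T|)%N -> injective f -> count (fun u => f u == x) (enum T) = 1%N.
Proof.
move=> le_VT f_inj; have [g fK gK] := inj_card_bij f_inj le_VT.
rewrite (eq_count (a2 := pred1 (g x))) => [|u]; last exact: can2_eq.
by rewrite count_uniq_mem ?enum_uniq ?mem_enum.
Qed.

Lemma forall_eq_ffunE (I : finType) (T : eqType) (g : I -> T) (x : {ffun I -> T}) :
  [forall i, g i == x i] = ([ffun i => g i] == x).
Proof.
apply/forallP/eqP => [gx | <- i]; last by rewrite ffunE.
by apply/ffunP => i; rewrite ffunE; apply/eqP.
Qed.

Lemma distinct3_sorted (P : nat -> Prop) (G : Prop) :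
  (forall a b c, (a < b < c)%N -> P a -> P b -> P c -> G) ->
  forall a b c, a != b -> a != c -> b != c -> P a -> P b -> P c -> G.
Proof.
move=> sorted_G a b c ab ac bc Pa Pb Pc.
case: (ltngtP a b) => ? ; case: (ltngtP a c) => ?; case: (ltngtP b c) => ?;
  try lia; first [ by apply: (sorted_G _ _ _ _ Pa Pb Pc); lia
                 | by apply: (sorted_G _ _ _ _ Pa Pc Pb); lia
                 | by apply: (sorted_G _ _ _ _ Pb Pa Pc); lia
                 | by apply: (sorted_G _ _ _ _ Pb Pc Pa); lia
                 | by apply: (sorted_G _ _ _ _ Pc Pa Pb); lia
                 | by apply: (sorted_G _ _ _ _ Pc Pb Pa); lia ].
Qed.

Lemma exists_rootless_sqr_add (F : finFieldType) :
  2 \in [pchar F] -> exists c : F, forall a, a ^+ 2 + a + c != 0.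
Proof.
move=> pchar2; pose s a : F := a ^+ 2 + a.
have s_not_inj : ~ injective s.
  move=> /(_ 0 1); rewrite /s expr0n expr1n addr0 -[1 + 1]/(2%:R) (pcharf0 pchar2).
  by move/(_ erefl)/eqP; rewrite eq_sym oner_eq0.
have [b s_b] : exists b, b \notin codom s.
  case: (pickP [pred b | b \notin codom s]) => [b|s_onto]; first by exists b.
  case: s_not_inj; apply/injectiveP; rewrite /injectiveb /dinjectiveb.
  rewrite (uniq_size_uniq (enum_uniq F)) ?size_map // => b.
  by rewrite mem_enum -codomE; move: (s_onto b) => /= /negbFE ->.
exists (- b) => a; apply: contra s_b; rewrite addr_eq0 opprK => /eqP <-.
exact: codom_f.
Qed.

Lemma mulmx_rV3E (R : nzRingType) n (u : 'rV[R]_3) (M : 'M[R]_(3, n)) k :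
  (u *m M) 0 k = u 0 0 * M 0 k + u 0 1 * M 1 k + u 0 2 * M 2 k.
Proof.
rewrite mxE !big_ord_recl big_ord0 addr0 addrA.
by congr (_ * _ + _ * _ + _ * _); congr (_ _ _); apply: val_inj.
Qed.

Lemma rV3_eq0 (R : nzRingType) (u : 'rV[R]_3) :
  u 0 0 = 0 -> u 0 1 = 0 -> u 0 2 = 0 -> u = 0.
Proof.
move=> u0 u1 u2; apply/rowP => -[[|[|[|//]]] lt_i3]; rewrite mxE;
  [rewrite -u0 | rewrite -u1 | rewrite -u2]; congr (u 0 _); exact: val_inj.
Qed.

Section PolynomialRoots.
Variable F : fieldType.

Lemma linear_roots2_eq0 (a b w0 w1 : F) : a != b ->
  w0 + w1 * a = 0 -> w0 + w1 * b = 0 -> w0 = 0 /\ w1 = 0.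
Proof.
move=> ab ha hb.
have : (a - b) * w1 = (w0 + w1 * a) - (w0 + w1 * b) by ring.
rewrite ha hb subrr => /eqP; rewrite mulf_eq0 subr_eq0 (negPf ab) /= => /eqP w1_0.
by move: ha; rewrite w1_0 mul0r addr0.
Qed.

Lemma quadratic_roots3_eq0 (a b c w0 w1 w2 : F) : a != b -> a != c -> b != c ->
  w0 + w1 * a + w2 * a ^+ 2 = 0 -> w0 + w1 * b + w2 * b ^+ 2 = 0 ->
  w0 + w1 * c + w2 * c ^+ 2 = 0 -> [/\ w0 = 0, w1 = 0 & w2 = 0].
Proof.
move=> ab ac bc ha hb hc.
have deflate x : a != x -> w0 + w1 * x + w2 * x ^+ 2 = 0 -> (w1 + w2 * a) + w2 * x = 0.
  move=> ax hx; have : (x - a) * ((w1 + w2 * a) + w2 * x) =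
      (w0 + w1 * x + w2 * x ^+ 2) - (w0 + w1 * a + w2 * a ^+ 2) by ring.
  by rewrite hx ha subrr => /eqP; rewrite mulf_eq0 subr_eq0 eq_sym (negPf ax) => /eqP.
have [w1a_0 w2_0] := linear_roots2_eq0 bc (deflate b ab hb) (deflate c ac hc).
have w1_0 : w1 = 0 by move: w1a_0; rewrite w2_0 mul0r addr0.
by split=> //; move: ha; rewrite w1_0 w2_0 !mul0r !addr0.
Qed.

End PolynomialRoots.

Lemma sqrf_inj_pchar2 (F : fieldType) : 2 \in [pchar F] -> injective (fun a : F => a ^+ 2).
Proof. by move=> pchar2; apply: (fmorph_inj (pFrobenius_aut pchar2)). Qed.

Section Hyperoval.
Variable F : finFieldType.
Local Notation q := #|F|.

Definition hyperoval_param (j : nat) : F := nth 0 (enum F) j.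

(* Column j is (1, a_j, a_j^2) for j < q, then (0, 1, 0) and (0, 0, 1). *)
Definition hyperoval_coord (j i : nat) : F :=
  if (j < q)%N then hyperoval_param j ^+ i else ((i == j - q + 1)%N)%:R.

Definition hyperoval_mx : 'M[F]_(3, q + 2) := \matrix_(i, j) hyperoval_coord j i.

Definition hyperoval_dot (w : 'rV[F]_3) (j : nat) : F :=
  w 0 0 * hyperoval_coord j 0 + w 0 1 * hyperoval_coord j 1 + w 0 2 * hyperoval_coord j 2.

Lemma mul_hyperoval_mxE (w : 'rV[F]_3) j : (w *m hyperoval_mx) 0 j = hyperoval_dot w j.
Proof. by rewrite mulmx_rV3E !mxE. Qed.

Lemma hyperoval_param_inj j j' :
  (j < q)%N -> (j' < q)%N -> j != j' -> hyperoval_param j != hyperoval_param j'.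
Proof. by move=> lt_jq lt_j'q; rewrite /hyperoval_param nth_uniq ?enum_uniq -?cardT. Qed.

Lemma hyperoval_dot_param w j : (j < q)%N ->
  hyperoval_dot w j = w 0 0 + w 0 1 * hyperoval_param j + w 0 2 * hyperoval_param j ^+ 2.
Proof. by move=> lt_jq; rewrite /hyperoval_dot /hyperoval_coord lt_jq expr0 expr1 !mulr1. Qed.

Lemma hyperoval_dot_nucleus w : hyperoval_dot w q = w 0 1.
Proof. by rewrite /hyperoval_dot /hyperoval_coord ltnn subnn /= !mulr0 mulr1 add0r addr0. Qed.

Lemma hyperoval_dot_infinity w : hyperoval_dot w q.+1 = w 0 2.
Proof.
by rewrite /hyperoval_dot /hyperoval_coord ltnNge leqnSn subSnn /= !mulr0 mulr1 !add0r.
Qed.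

Lemma hyperoval_sorted_cols_free (pchar2 : 2 \in [pchar F]) w j1 j2 j3 :
  (j1 < j2 < j3)%N -> (j3 < q + 2)%N ->
  hyperoval_dot w j1 = 0 -> hyperoval_dot w j2 = 0 -> hyperoval_dot w j3 = 0 -> w = 0.
Proof.
move=> /andP[lt12 lt23] lt3 h1 h2 h3.
have param_neq j j' : (j < j')%N -> (j' < q)%N -> hyperoval_param j != hyperoval_param j'.
  by move=> lt_jj' lt_j'q; apply: hyperoval_param_inj; lia.
have [lt3q | ge3q] := ltnP j3 q.
  rewrite !hyperoval_dot_param in h1 h2 h3; try lia.
  have neq12 := param_neq _ _ lt12 (ltn_trans lt23 lt3q).
  have neq13 := param_neq _ _ (ltn_trans lt12 lt23) lt3q.
  have [w0 w1 w2] := quadratic_roots3_eq0 neq12 neq13 (param_neq _ _ lt23 lt3q) h1 h2 h3.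
  exact: rV3_eq0.
have [e3 | e3] : j3 = q \/ j3 = q.+1 by lia.
  move: h3; rewrite e3 hyperoval_dot_nucleus => w1.
  rewrite !hyperoval_dot_param in h1 h2; try lia.
  rewrite w1 !mul0r !addr0 in h1 h2.
  have neq12 : hyperoval_param j1 ^+ 2 != hyperoval_param j2 ^+ 2.
    by rewrite (inj_eq (sqrf_inj_pchar2 pchar2)) param_neq //; lia.
  have [w0 w2] := linear_roots2_eq0 neq12 h1 h2.
  exact: rV3_eq0.
move: h3; rewrite e3 hyperoval_dot_infinity => w2.
have [lt2q | ge2q] := ltnP j2 q.
  rewrite !hyperoval_dot_param in h1 h2; try lia.
  rewrite w2 !mul0r !addr0 in h1 h2.
  have [w0 w1] := linear_roots2_eq0 (param_neq _ _ lt12 lt2q) h1 h2.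
  exact: rV3_eq0.
have e2 : j2 = q by lia.
move: h2; rewrite e2 hyperoval_dot_nucleus => w1.
rewrite hyperoval_dot_param in h1; last lia.
rewrite w1 w2 !mul0r !addr0 in h1.
exact: rV3_eq0.
Qed.

Lemma hyperoval_cols_free (pchar2 : 2 \in [pchar F]) (w : 'rV[F]_3)
    (cols : 'I_3 -> 'I_(q + 2)) : injective cols ->
  (forall i, (w *m hyperoval_mx) 0 (cols i) = 0) -> w = 0.
Proof.
move=> cols_inj w_cols.
have cols_neq i i' : i != i' -> (cols i : nat) != cols i'.
  by move=> neq_ii'; rewrite val_eqE (inj_eq cols_inj).
pose zero_col j := (j < q + 2)%N /\ hyperoval_dot w j = 0.
have zero_cols i : zero_col (cols i) by split; rewrite -?mul_hyperoval_mxE.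
apply: (@distinct3_sorted zero_col _ _ (cols 0) (cols 1) (cols 2)); rewrite ?cols_neq //.
move=> j1 j2 j3 lt123 [_ h1] [_ h2] [lt3 h3].
exact: (hyperoval_sorted_cols_free pchar2 lt123 lt3).
Qed.

Section TailColumns.
Variable b : F.
Hypothesis b_rootless : forall a, a ^+ 2 + a + b != 0.

(* u *m tail_mx = (u_1 - u_2, u_0 - b u_2). *)
Definition tail_mx : 'M[F]_(3, 2) :=
  \matrix_(i, k) (if k == 0 then [:: 0; 1; -1] else [:: 1; 0; -b])`_i.

Lemma tail_mx_ker w j : (j < q + 2)%N -> hyperoval_dot w j = 0 -> w *m tail_mx = 0 -> w = 0.
Proof.
move=> lt_j hj /rowP tail0.
move: (tail0 1) (tail0 0); rewrite !mulmx_rV3E !mxE /=.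
rewrite mulr1 mulr0 addr0 mulrN => /eqP; rewrite subr_eq0 => /eqP w0.
rewrite mulr0 add0r mulr1 mulrN1 => /eqP; rewrite subr_eq0 => /eqP w1.
suff w2 : w 0 2 = 0 by apply: rV3_eq0; rewrite ?w0 ?w1 w2 ?mul0r.
have [lt_jq | ge_jq] := ltnP j q.
  move: hj; rewrite hyperoval_dot_param // w0 w1 => /eqP.
  set a := hyperoval_param j.
  have -> : w 0 2 * b + w 0 2 * a + w 0 2 * a ^+ 2 = (a ^+ 2 + a + b) * w 0 2 by ring.
  by rewrite mulf_eq0 (negPf (b_rootless a)) => /eqP.
have [e | e] : j = q \/ j = q.+1 by lia.
  by rewrite -w1 -hyperoval_dot_nucleus -e.
by rewrite -hyperoval_dot_infinity -e.
Qed.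

Definition aoa_row (u : 'rV[F]_3) : {ffun 'I_(q + 2) -> F} * 'rV[F]_2 :=
  ([ffun j => (u *m hyperoval_mx) 0 j], u *m tail_mx).

Definition aoa_rows := map aoa_row (enum 'rV[F]_3).

Lemma size_aoa_rows : size aoa_rows = (q ^ 3)%N.
Proof. by rewrite size_map -cardT card_mx mul1n. Qed.

Lemma aoa_rows_OA_count (pchar2 : 2 \in [pchar F]) (cols : 'I_3 -> 'I_(q + 2)) :
  injective cols -> forall x : {ffun 'I_3 -> F},
  count (fun r : {ffun 'I_(q + 2) -> F} => [forall i, r (cols i) == x i])
    (map fst aoa_rows) = 1%N.
Proof.
move=> cols_inj x; rewrite -map_comp count_map.
under eq_count => u do rewrite /= forall_eq_ffunE.
apply: count_injective_eq1 => [|u v /ffunP uv]; first by rewrite card_ffun card_ord card_mx.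
apply/subr0_eq/(hyperoval_cols_free pchar2 cols_inj) => i.
by move: (uv i); rewrite !ffunE mulmxBl !mxE => ->; rewrite subrr.
Qed.

Lemma aoa_rows_count (cols : 'I_1 -> 'I_(q + 2)) (x : {ffun 'I_1 -> F}) (y : 'rV[F]_2) :
  count (fun r : {ffun 'I_(q + 2) -> F} * 'rV[F]_2 =>
           [forall i, r.1 (cols i) == x i] && (r.2 == y)) aoa_rows = 1%N.
Proof.
rewrite count_map.
under eq_count => u do rewrite /= forall_eq_ffunE -xpair_eqE.
apply: count_injective_eq1 => [|u v [/ffunP uv uv_tail]].
  by rewrite card_prod card_ffun !card_ord !card_mx -expnD.
apply/subr0_eq/(tail_mx_ker (ltn_ord (cols 0))); last by rewrite mulmxBl uv_tail subrr.
by move: (uv 0); rewrite -mul_hyperoval_mxE !ffunE mulmxBl !mxE => ->; rewrite subrr.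
Qed.

Lemma aoa_row0 : aoa_row 0 = (0, 0).
Proof. by rewrite /aoa_row !mul0mx; congr pair; apply/ffunP => j; rewrite !ffunE mxE. Qed.

Lemma aoa_rowD u v :
  aoa_row (u + v) = ((aoa_row u).1 + (aoa_row v).1, (aoa_row u).2 + (aoa_row v).2).
Proof. by rewrite /aoa_row !mulmxDl; congr pair; apply/ffunP => j; rewrite !ffunE mxE. Qed.

Lemma aoa_rowZ a u :
  aoa_row (a *: u) = ([ffun j => a * (aoa_row u).1 j], a *: (aoa_row u).2).
Proof. by rewrite /aoa_row -!scalemxAl; congr pair; apply/ffunP => j; rewrite !ffunE mxE. Qed.

Lemma mem_aoa_rows u : aoa_row u \in aoa_rows.
Proof. by rewrite map_f ?mem_enum. Qed.

End TailColumns.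

End Hyperoval.

Theorem theorem3p9 (F : finFieldType) (m : nat) :
  #|F| = (2 ^ m)%N -> (4 <= #|F|)%N ->
  exists A : seq ({ffun 'I_(#|F| + 2) -> F} * 'rV[F]_(3 - 1)),
    is_linear_AOA 1 3 (#|F| + 2) A.
Proof.
move=> card_F ge4_card_F.
have pchar2 : 2 \in [pchar F] by apply: card_finPcharP card_F _.
have [b b_rootless] := exists_rootless_sqr_add pchar2.
exists (aoa_rows b); split.
- split; [done | lia | | by rewrite card_mx | by move=> cols _; apply: aoa_rows_count].
  split; [lia | done | by rewrite size_map size_aoa_rows | exact: aoa_rows_OA_count pchar2].
- by rewrite -(aoa_row0 b) mem_aoa_rows.
- by move=> _ _ /mapP[u _ ->] /mapP[v _ ->]; rewrite -aoa_rowD mem_aoa_rows.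
- by move=> a _ /mapP[u _ ->]; rewrite -aoa_rowZ mem_aoa_rows.
Qed.
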